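(* Let $\mathcal{V}$ be a pseudo-variety of $\mathbb{M}$-algebras such that every language recognised by an algebra in $\mathcal{V}$ has a syntactic algebra, and let $\mathcal{K}$ be a variety of languages such that every language in $\mathcal{K}$ has a syntactic algebra. The following statements are equivalent: (1) $\mathcal{K}$ consists of those languages that are recognised by some algebra in $\mathcal{V}$; (2) $\mathcal{K}$ consists of all languages $K$ with $\mathrm{Syn}(K)\in\mathcal{V}$; (3) $\mathcal{V}$ consists of those finitary algebras that only recognise languages in $\mathcal{K}$; (4) $\mathcal{V}$ is the pseudo-variety generated by the set $\{\mathrm{Syn}(K):K\in\mathcal{K}\}$.
   Context: Fix a set $\Xi$ of sorts; $\mathsf{Pos}^\Xi$: $\Xi$-sorted families of partial orders with sort-wise monotone maps. $\mathbb{M}$ is a monad on $\mathsf{Pos}^\Xi$ ($\mathrm{flat},\mathrm{sing}$) preserving injective, surjective, bijective functions and preimages and using the standard ordering (order on $\mathbb{M}A$ is $\{(\mathbb{M}p(u),\mathbb{M}q(u)):u\in\mathbb{M}R\}$, $R$ the order of $A$). $\mathbb{M}$-algebras $\langle A,\pi\rangle$: $\pi\circ\mathbb{M}\pi=\pi\circ\mathrm{flat}$, $\pi\circ\mathrm{sing}=\mathrm{id}$; morphisms commute with products. Finitary: sort-wise finite and finitely generated. Quotient of $\mathfrak{B}$: codomain of a surjective morphism from $\mathfrak{B}$. For $\Delta\subseteq\Xi$: $A|_\Delta$ the part with sorts in $\Delta$, $\mathbb{M}|_\Delta A:=(\mathbb{M}(A|_\Delta))|_\Delta$, $\mathfrak{A}|_\Delta$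 the $\mathbb{M}|_\Delta$-algebra on $A|_\Delta$ with restricted product. $\mathfrak{B}$ is a sort-accumulation point of $\mathcal{A}$ if for every finite $\Delta\subseteq\Xi$ there is $\mathfrak{A}\in\mathcal{A}$ with $\mathfrak{B}|_\Delta$ a quotient of $\mathfrak{A}|_\Delta$. A pseudo-variety is a class of finitary algebras closed under quotients, finitary subalgebras of finite products and sort-accumulation points; the pseudo-variety generated by a set is the smallest one containing it. An alphabet is a finite unordered set $\Sigma$; a language is $K\subseteq\mathbb{M}_\xi\Sigma$; $\mathfrak{A}$ recognises $K$ if $K=\varphi^{-1}[P]$ for a morphism $\varphi:\mathbb{M}\Sigma\to\mathfrak{A}$ and upwards closed $P\subseteq A_\xi$. Contexts with hole of sort $\zeta$: $p\in\mathbb{M}(\Sigma+\{\Box\})$; $p[s]$ the image of $p$ under the algebra morphism extending $\Box\mapsto s$, $c\mapsto\mathrm{sing}(c)$; $p^{-1}[K]=\{s:p[s]\in K\}$. Syntactic congruence $s\preceq_K t$ ($s,t$ of sort $\zeta$) iff $p[s]\in K\Rightarrow p[t]\in K$ for all contexts $p\in\mathbb{M}_\xi(\Sigma+\{\Box\})$ with hole of sort $\zeta$. $K$ has a syntactic algebra if $\preceq_K$ is a congruence ordering ($\mathbb{M}q(s)\leq\mathbb{M}q(t)\Rightarrow\pi(s)\preceq_K\pi(t)$, $q$ the quotient map onto the ordered set of classes) with sort-wise finite quotient; $\mathrm{Syn}(K)=\mathbb{M}\Sigma/{\preceq_K}$. A variety of languages is a family $\mathcal{K}$ assigning to each alphabet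 $\Sigma$ a class $\mathcal{K}[\Sigma]$ of languages over $\Sigma$ closed under finite unions and intersections, inverse morphisms ($\psi^{-1}[K]$ for algebra morphisms $\psi:\mathbb{M}\Sigma\to\mathbb{M}\Gamma$) and derivatives $p^{-1}[K]$; ''$K\in\mathcal{K}$'' means $K\in\mathcal{K}[\Sigma]$ for some alphabet $\Sigma$. *)

From mathcomp Require Import all_boot.
From Stdlib Require ProofIrrelevance List.
Set Implicit Arguments. Unset Strict Implicit. Unset Printing Implicit Defensive.

Section SortedPos.
Variable Xi : Type.

Record SPos := {
  car :> Xi -> Type;
  le : forall x, car x -> car x -> Prop;
  le_refl : forall x (a : car x), le a a;
  le_trans : forall x (a b c : car x), le a b -> le b c -> le a c;
  le_anti : forall x (a b : car x), le a b -> le b a -> a = b }.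

Record PosHom (A B : SPos) := {
  hfun :> forall x, A x -> B x;
  hmono : forall x (a b : A x), le a b -> le (hfun a) (hfun b) }.

Definition idH (A : SPos) : PosHom A A :=
  @Build_PosHom A A (fun x a => a) (fun x a b h => h).

Definition compH (A B C : SPos) (g : PosHom B C) (f : PosHom A B) : PosHom A C :=
  @Build_PosHom A C (fun x a => g x (f x a))
    (fun x a b h => hmono g (hmono f h)).

Section Sub.
Variables (A : SPos) (P : forall x, A x -> Prop).
Definition sub_car (x : Xi) := {a : A x | P a}.
Definition sub_le (x : Xi) (a b : sub_car x) := le (proj1_sig a) (proj1_sig b).
Lemma sub_le_refl x (a : sub_car x) : sub_le a a.
Proof. exact: le_refl. Qed.
Lemma sub_le_trans x (a b c : sub_car x) : sub_le a b -> sub_le b c -> sub_le a c.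
Proof. exact: le_trans. Qed.
Lemma sub_le_anti x (a b : sub_car x) : sub_le a b -> sub_le b a -> a = b.
Proof.
case: a b => [a Ha] [b Hb]; rewrite /sub_le /= => h1 h2.
have E := le_anti h1 h2; subst b; by rewrite (ProofIrrelevance.proof_irrelevance _ Ha Hb).
Qed.
Definition Sub : SPos := Build_SPos sub_le_refl sub_le_trans sub_le_anti.
Definition incl : PosHom Sub A :=
  @Build_PosHom Sub A (fun x a => proj1_sig a) (fun x a b h => h).
End Sub.

Section Sq.
Variable A : SPos.
Definition sq_car (x : Xi) := (A x * A x)%type.
Definition sq_le (x : Xi) (a b : sq_car x) := le a.1 b.1 /\ le a.2 b.2.
Lemma sq_le_refl x (a : sq_car x) : sq_le a a.
Proof. by split; apply: le_refl. Qed.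
Lemma sq_le_trans x (a b c : sq_car x) : sq_le a b -> sq_le b c -> sq_le a c.
Proof. by case=> h1 h2 [h3 h4]; split; apply: le_trans; eassumption. Qed.
Lemma sq_le_anti x (a b : sq_car x) : sq_le a b -> sq_le b a -> a = b.
Proof.
case: a b => [a1 a2] [b1 b2] [/= h1 h2] [/= h3 h4].
by rewrite (le_anti h1 h3) (le_anti h2 h4).
Qed.
Definition Sq : SPos := Build_SPos sq_le_refl sq_le_trans sq_le_anti.
Definition OrdRel : SPos := Sub (fun x (ab : Sq x) => le ab.1 ab.2).
Definition relp : PosHom OrdRel A :=
  @Build_PosHom OrdRel A (fun x ab => (proj1_sig ab).1)
    (fun x a b h => proj1 h).
Definition relq : PosHom OrdRel A :=
  @Build_PosHom OrdRel A (fun x ab => (proj1_sig ab).2)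
    (fun x a b h => proj2 h).
End Sq.

Record Monad := {
  M : SPos -> SPos;
  Mmap : forall A B, PosHom A B -> PosHom (M A) (M B);
  sing : forall A, PosHom A (M A);
  flat : forall A, PosHom (M (M A)) (M A);
  Mmap_ext : forall A B (f g : PosHom A B), (forall x a, f x a = g x a) ->
               forall x u, Mmap f x u = Mmap g x u;
  Mmap_id : forall A x u, Mmap (idH A) x u = u;
  Mmap_comp : forall A B C (f : PosHom A B) (g : PosHom B C) x u,
      Mmap (compH g f) x u = Mmap g x (Mmap f x u);
  sing_nat : forall A B (f : PosHom A B) x a,
      Mmap f x (sing A x a) = sing B x (f x a);
  flat_nat : forall A B (f : PosHom A B) x u,
      Mmap f x (flat A x u) = flat B x (Mmap (Mmap f) x u);
  flat_sing : forall A x u, flat A x (sing (M A) x u) = u;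
  flat_Msing : forall A x u, flat A x (Mmap (sing A) x u) = u;
  flat_flat : forall A x u,
      flat A x (flat (M A) x u) = flat A x (Mmap (flat A) x u);
  pres_inj : forall A B (f : PosHom A B), (forall x, injective (f x)) ->
      forall x, injective (Mmap f x);
  pres_surj : forall A B (f : PosHom A B),
      (forall x (b : B x), exists a, f x a = b) ->
      forall x (v : M B x), exists u, Mmap f x u = v;
  pres_bij : forall A B (f : PosHom A B), (forall x, bijective (f x)) ->
      forall x, bijective (Mmap f x);
  (* M preserves preimages: M(f^-1[C]) = (Mf)^-1[MC] (as subsets of MA) *)
  pres_preim : forall A B (f : PosHom A B) (C : forall x, B x -> Prop) x
      (u : M A x),
      (exists w : M (Sub C) x, Mmap (incl C) x w = Mmap f x u) <->
      (exists v : M (Sub (fun y (a : A y) => C y (f y a))) x,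
          Mmap (incl _) x v = u);
  std_order : forall A x (u v : M A x),
      le u v <-> exists w : M (OrdRel A) x,
                   Mmap (relp A) x w = u /\ Mmap (relq A) x w = v }.

Section Algebras.
Variable T : Monad.
Local Notation M := (M T).
Local Notation Mmap := (Mmap T).
Local Notation flat := (flat T).
Local Notation sing := (sing T).

Record Alg := {
  acar :> SPos;
  aprod : PosHom (M acar) acar;
  alg_assoc : forall x u, aprod x (Mmap aprod x u) = aprod x (flat _ x u);
  alg_unit : forall x a, aprod x (sing _ x a) = a }.

Record Hom (A B : Alg) := {
  hpos :> PosHom A B;
  hcomm : forall x u, hpos x (aprod A x u) = aprod B x (Mmap hpos x u) }.

Definition Surj (A B : SPos) (f : PosHom A B) :=
  forall x (b : B x), exists a, f x a = b.

Lemma free_assoc (A : SPos) x u :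
  flat A x (Mmap (flat A) x u) = flat A x (flat (M A) x u).
Proof. by rewrite flat_flat. Qed.
Definition FreeAlg (A : SPos) : Alg :=
  @Build_Alg (M A) (flat A) (@free_assoc A) (fun x a => flat_sing a).

Definition SortFinite (A : SPos) :=
  forall x, exists l : list (A x), forall a, List.In a l.

Definition SubClosed (A : Alg) (C : forall x, A x -> Prop) :=
  forall x (u : M (Sub C) x), C x (aprod A x (Mmap (incl C) x u)).

Definition FinGen (A : Alg) :=
  exists G : list {x : Xi & A x},
    forall C : forall x, A x -> Prop, SubClosed C ->
      (forall g, List.In g G -> C (projT1 g) (projT2 g)) ->
      forall x a, C x a.

Definition Finitary (A : Alg) := SortFinite A /\ FinGen A.

Definition QuotientOf (A B : Alg) := exists h : Hom A B, Surj h.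

(* B|_Delta is a quotient of A|_Delta (as M|_Delta-algebras), Delta = [set x | In x D] *)
Definition Restr (A : SPos) (D : list Xi) : SPos := Sub (fun x (_ : A x) => List.In x D).

Definition RestrQuotientOf (D : list Xi) (A B : Alg) :=
  exists h : PosHom (Restr A D) (Restr B D),
    Surj h /\
    forall x (d : List.In x D) (u : M (Restr A D) x),
      proj1_sig (h x (exist _ (aprod A x (Mmap (incl _) x u)) d)) =
      aprod B x (Mmap (incl _) x (Mmap h x u)).

Definition SortAccPoint (V : Alg -> Prop) (B : Alg) :=
  forall D : list Xi, exists A, V A /\ RestrQuotientOf D A B.

(* B is (isomorphic to) a subalgebra of the finite product of the F i:
   a family of morphisms f i : B -> F i that is jointly an order embedding *)
Definition SubOfFinProd (V : Alg -> Prop) (B : Alg) :=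
  exists (I : finType) (F : I -> Alg) (f : forall i, Hom B (F i)),
    (forall i, V (F i)) /\
    forall x (a b : B x), le a b <-> (forall i, le (f i x a) (f i x b)).

Definition PseudoVariety (V : Alg -> Prop) :=
  (forall A, V A -> Finitary A) /\
  (forall A B, V A -> QuotientOf A B -> V B) /\
  (forall B, Finitary B -> SubOfFinProd V B -> V B) /\
  (forall B, Finitary B -> SortAccPoint V B -> V B).

Definition GeneratedPV (S : Alg -> Prop) (A : Alg) :=
  forall V, PseudoVariety V -> (forall B, S B -> V B) -> V A.

Record Alphabet := { asym : finType; asort : asym -> Xi }.

Definition apos_car (S : Alphabet) (x : Xi) := {a : asym S | asort a = x}.
Definition APos (S : Alphabet) : SPos :=
  @Build_SPos (apos_car S) (fun x a b => a = b)
    (fun x a => erefl) (fun x a b c h1 h2 => etrans h1 h2)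
    (fun x a b h _ => h).

Definition MS (S : Alphabet) := FreeAlg (APos S).

Definition Language (S : Alphabet) (xi : Xi) := M (APos S) xi -> Prop.

Definition Recognises (A : Alg) (S : Alphabet) (xi : Xi) (K : Language S xi) :=
  exists (phi : Hom (MS S) A) (P : A xi -> Prop),
    (forall a b, P a -> le a b -> P b) /\
    forall s, K s <-> P (phi xi s).

(* Sigma + {Box}, Box of sort zeta *)
Definition AddHole (S : Alphabet) (zeta : Xi) : Alphabet :=
  {| asym := option (asym S);
     asort := fun o => match o with Some a => asort a | None => zeta end |}.

Section Plug.
Variables (S : Alphabet) (zeta : Xi) (s : M (APos S) zeta).
Definition plug_fun (x : Xi) (o : APos (AddHole S zeta) x) : M (APos S) x :=
  match o with
  | exist a h =>
    (match a as a0 return @asort (AddHole S zeta) a0 = x -> M (APos S) x with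
     | Some b => fun h => sing (APos S) x (exist _ b h)
     | None => fun h => eq_rect zeta (fun y => M (APos S) y) s x h
     end) h
  end.
Lemma plug_mono x (a b : APos (AddHole S zeta) x) :
  le a b -> le (plug_fun a) (plug_fun b).
Proof. by move=> /= ->; apply: le_refl. Qed.
Definition plug_hom : PosHom (APos (AddHole S zeta)) (M (APos S)) :=
  Build_PosHom plug_mono.
(* p[s] : image of p under the algebra morphism extending Box |-> s, c |-> sing c *)
Definition plug (xi : Xi) (p : M (APos (AddHole S zeta)) xi) : M (APos S) xi :=
  flat _ xi (Mmap plug_hom xi p).
End Plug.

Definition SynLe (S : Alphabet) (xi : Xi) (K : Language S xi) (zeta : Xi)
  (s t : M (APos S) zeta) :=
  forall p : M (APos (AddHole S zeta)) xi, K (plug s p) -> K (plug t p).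

(* K has a syntactic algebra: <=_K is a congruence ordering whose quotient
   (the ordered set of classes, B with quotient map q) is sort-wise finite *)
Definition HasSynAlg (S : Alphabet) (xi : Xi) (K : Language S xi) :=
  exists (B : SPos) (q : PosHom (M (APos S)) B),
    Surj q /\
    (forall x (s t : M (APos S) x), le (q x s) (q x t) <-> SynLe K s t) /\
    SortFinite B /\
    (forall x (s t : M (M (APos S)) x),
        le (Mmap q x s) (Mmap q x t) -> SynLe K (flat _ x s) (flat _ x t)).

(* B is (a copy of) Syn(K) = M Sigma / <=_K with the induced algebra structure *)
Definition IsSyn (S : Alphabet) (xi : Xi) (K : Language S xi) (B : Alg) :=
  exists q : Hom (MS S) B,
    Surj q /\ forall x (s t : M (APos S) x), le (q x s) (q x t) <-> SynLe K s t.

Definition LangClass := forall (S : Alphabet) (xi : Xi), Language S xi -> Prop.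

Definition LangVariety (KK : LangClass) :=
  (forall S xi, KK S xi (fun _ => False)) /\
  (forall S xi, KK S xi (fun _ => True)) /\
  (forall S xi (K L : Language S xi),
      KK S xi K -> KK S xi L -> KK S xi (fun s => K s \/ L s)) /\
  (forall S xi (K L : Language S xi),
      KK S xi K -> KK S xi L -> KK S xi (fun s => K s /\ L s)) /\
  (forall S G (psi : Hom (MS S) (MS G)) xi (K : Language G xi),
      KK G xi K -> KK S xi (fun s => K (psi xi s))) /\
  (forall S xi zeta (K : Language S xi) (p : M (APos (AddHole S zeta)) xi),
      KK S xi K -> KK S zeta (fun s => K (plug s p))).

End Algebras.
End SortedPos.

(* All four statements say that V is the class W of finitary algebras recognising only
   languages of K.  W is a pseudo-variety because K is closed under the Boolean operations,
   inverse morphisms and derivatives: an upset of a finite algebra is a finite union of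
   principal upsets, and a principal upset of Syn(K) is a finite intersection of derivatives
   of K.  Conversely W lies in every pseudo-variety containing the syntactic algebras of K:
   for a finite set of sorts, algebras recognising the principal upsets of A separate the
   elements of those sorts, so A restricted to them is a quotient of a subalgebra of a finite
   product of such algebras, and A is a sort-accumulation point.  Finally Syn(K) is a quotient
   of a subalgebra of every algebra recognising K. *)

From Pilot Require Import Defs.
From mathcomp Require Import all_boot.
From Stdlib Require Import ProofIrrelevance FunctionalExtensionality PropExtensionality.
From Stdlib Require Import ClassicalEpsilon Classical.
Set Implicit Arguments. Unset Strict Implicit. Unset Printing Implicit Defensive.

Section Eilenberg.
Variables (Xi : Type) (T : Monad Xi).
Local Notation MM := (M T).
Local Notation Mm := (Mmap T).

(** * Algebras and their morphisms *)

Lemma Mmap_comp_ext (A B C : SPos Xi) (f : PosHom A B) (g : PosHom B C) (h : PosHom A C) :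
  (forall x a, g x (f x a) = h x a) -> forall x u, Mm g x (Mm f x u) = Mm h x u.
Proof. by move=> gfh x u; rewrite -Mmap_comp; apply: Mmap_ext => y a /=. Qed.

Lemma Mmap_le (A B : SPos Xi) (f g : PosHom A B) :
  (forall x a, le (f x a) (g x a)) -> forall x u, le (Mm f x u) (Mm g x u).
Proof.
move=> fg x u.
pose pair y (a : A y) : OrdRel B y := exist _ (f y a, g y a) (fg y a).
have pair_mono y (a b : A y) : le a b -> le (pair y a) (pair y b).
  by move=> ab; split; apply: hmono.
by apply/std_order; exists (Mm (Build_PosHom pair_mono) x u); split; apply: Mmap_comp_ext.
Qed.

Lemma Sub_val_inj (A : SPos Xi) (P : forall x, A x -> Prop) x (a b : Defs.Sub P x) :
  proj1_sig a = proj1_sig b -> a = b.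
Proof. by case: a b => [a Pa] [b Pb] /= eab; subst b; rewrite (proof_irrelevance _ Pa Pb). Qed.

Definition APos_hom (S : Alphabet Xi) (B : SPos Xi) (f : forall y, APos S y -> B y) :
  PosHom (APos S) B.
Proof. by refine (@Build_PosHom _ _ _ f _) => y a b /= ->; apply: le_refl. Defined.

Section FreeExtension.
Variables (S : SPos Xi) (B : Alg T) (g : PosHom S B).

Lemma free_ext_comm x (u : MM (FreeAlg T S) x) :
  compH (aprod B) (Mm g) x (aprod (FreeAlg T S) x u) =
  aprod B x (Mm (compH (aprod B) (Mm g)) x u).
Proof. by rewrite /= flat_nat -alg_assoc Mmap_comp. Qed.

Definition free_ext : Hom (FreeAlg T S) B := Build_Hom free_ext_comm.

Lemma free_ext_sing x a : free_ext x (sing T S x a) = g x a.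
Proof. by rewrite /= sing_nat alg_unit. Qed.

End FreeExtension.

Lemma eq_free_hom (S : SPos Xi) (B : Alg T) (h1 h2 : Hom (FreeAlg T S) B) :
  (forall x a, h1 x (sing T S x a) = h2 x (sing T S x a)) ->
  forall x u, h1 x u = h2 x u.
Proof.
move=> h12 x u; rewrite -(flat_Msing u).
rewrite [LHS](hcomm h1 (Mm (sing T S) x u)) [RHS](hcomm h2 (Mm (sing T S) x u)).
by rewrite -!Mmap_comp; congr (aprod B x _); apply: Mmap_ext => y a /=.
Qed.

Section CompHom.
Variables (A B C : Alg T) (g : Hom B C) (f : Hom A B).

Lemma comp_hom_comm x u : compH g f x (aprod A x u) = aprod C x (Mm (compH g f) x u).
Proof. by rewrite /= !hcomm Mmap_comp. Qed.

Definition comp_hom : Hom A C := Build_Hom comp_hom_comm.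

End CompHom.

Section SubAlgebra.
Variables (A : Alg T) (C : forall x, A x -> Prop) (C_closed : SubClosed C).

Definition sub_prod_fun x (u : MM (Defs.Sub C) x) : Defs.Sub C x :=
  exist _ (aprod A x (Mm (incl C) x u)) (C_closed u).

Lemma sub_prod_mono x (u v : MM (Defs.Sub C) x) :
  le u v -> le (sub_prod_fun u) (sub_prod_fun v).
Proof. by move=> uv; do 2 apply: hmono. Qed.

Definition sub_prod := Build_PosHom sub_prod_mono.

Lemma sub_assoc x u : sub_prod x (Mm sub_prod x u) = sub_prod x (flat T _ x u).
Proof.
apply: Sub_val_inj => /=.
by rewrite (Mmap_comp_ext (h := compH (aprod A) (Mm (incl C)))) // Mmap_comp alg_assoc -flat_nat.
Qed.

Lemma sub_unit x a : sub_prod x (sing T _ x a) = a.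
Proof. by apply: Sub_val_inj; rewrite /= sing_nat alg_unit. Qed.

Definition SubAlg : Alg T := Build_Alg sub_assoc sub_unit.

Definition incl_hom : Hom SubAlg A := @Build_Hom _ _ SubAlg A (incl C) (fun x u => erefl).

End SubAlgebra.

Section Image.
Variables (C A : Alg T) (h : Hom C A).

Definition im_pred x (a : A x) := exists c, h x c = a.

Definition corestr : PosHom C (Defs.Sub im_pred) :=
  @Build_PosHom _ C (Defs.Sub im_pred) (fun x c => exist _ (h x c) (ex_intro _ c erefl))
    (fun x a b ab => hmono h ab).

Lemma corestr_surj : Surj corestr.
Proof. by move=> x [a [c hca]]; exists c; apply: Sub_val_inj. Qed.

Lemma im_closed : SubClosed im_pred.
Proof.
move=> x u; have [w <-] := pres_surj corestr_surj u.
by rewrite (Mmap_comp_ext (h := h)) //; exists (aprod C x w); apply: hcomm.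
Qed.

Definition ImAlg := SubAlg im_closed.

Lemma corestr_comm x (u : MM C x) :
  corestr x (aprod C x u) = aprod ImAlg x (Mm corestr x u).
Proof. by apply: Sub_val_inj; rewrite /= hcomm (Mmap_comp_ext (h := h)). Qed.

Definition corestr_hom : Hom C ImAlg := @Build_Hom _ _ C ImAlg corestr corestr_comm.

End Image.

Arguments corestr_surj {C A} h.

Section Product.
Variables (I : Type) (F : I -> Alg T).

Definition prod_le x (f g : forall i, F i x) := forall i, le (f i) (g i).

Lemma prod_le_refl x (f : forall i, F i x) : prod_le f f.
Proof. by move=> i; apply: le_refl. Qed.

Lemma prod_le_trans x (f g h : forall i, F i x) : prod_le f g -> prod_le g h -> prod_le f h.
Proof. by move=> fg gh i; apply: le_trans (fg i) (gh i). Qed.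

Lemma prod_le_anti x (f g : forall i, F i x) : prod_le f g -> prod_le g f -> f = g.
Proof. by move=> fg gf; apply: functional_extensionality_dep => i; apply: le_anti. Qed.

Definition ProdPos : SPos Xi := Build_SPos prod_le_refl prod_le_trans prod_le_anti.

Definition proj (i : I) : PosHom ProdPos (F i) :=
  @Build_PosHom _ ProdPos (F i) (fun x f => f i) (fun x f g fg => fg i).

Definition prod_prod_fun x (u : MM ProdPos x) : ProdPos x :=
  fun i => aprod (F i) x (Mm (proj i) x u).

Lemma prod_prod_mono x (u v : MM ProdPos x) : le u v -> le (prod_prod_fun u) (prod_prod_fun v).
Proof. by move=> uv i; do 2 apply: hmono. Qed.

Definition prod_prod := Build_PosHom prod_prod_mono.

Lemma prod_assoc x u : prod_prod x (Mm prod_prod x u) = prod_prod x (flat T _ x u).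
Proof.
apply: functional_extensionality_dep => i /=; rewrite /prod_prod_fun.
rewrite (Mmap_comp_ext (h := compH (aprod (F i)) (Mm (proj i)))) //.
by rewrite Mmap_comp alg_assoc -flat_nat.
Qed.

Lemma prod_unit x a : prod_prod x (sing T _ x a) = a.
Proof.
by apply: functional_extensionality_dep => i; rewrite /= /prod_prod_fun sing_nat alg_unit.
Qed.

Definition ProdAlg : Alg T := Build_Alg prod_assoc prod_unit.

Definition proj_hom i : Hom ProdAlg (F i) :=
  @Build_Hom _ _ ProdAlg (F i) (proj i) (fun x u => erefl).

Variables (A : Alg T) (f : forall i, Hom A (F i)).

Definition tuple : PosHom A ProdPos :=
  @Build_PosHom _ A ProdPos (fun x a i => f i x a) (fun x a b ab i => hmono (f i) ab).

Lemma tuple_comm x u : tuple x (aprod A x u) = aprod ProdAlg x (Mm tuple x u).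
Proof.
apply: functional_extensionality_dep => i.
by rewrite /= /prod_prod_fun hcomm (Mmap_comp_ext (h := f i)).
Qed.

Definition tuple_hom : Hom A ProdAlg := @Build_Hom _ _ A ProdAlg tuple tuple_comm.

End Product.

Section Quotient.
Variables (C : Alg T) (B : SPos Xi) (q : PosHom C B) (q_surj : Surj q).
Hypothesis q_cong : forall x (s t : MM C x),
  le (Mm q x s) (Mm q x t) -> le (q x (aprod C x s)) (q x (aprod C x t)).

Definition Mmap_preim x (v : MM B x) : MM C x :=
  proj1_sig (constructive_indefinite_description _ (pres_surj q_surj v)).

Lemma Mmap_preimK x v : Mm q x (@Mmap_preim x v) = v.
Proof. by rewrite /Mmap_preim; case: constructive_indefinite_description. Qed.

Definition quot_prod_fun x (v : MM B x) : B x := q x (aprod C x (Mmap_preim v)).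

Lemma quot_prod_funE x w : quot_prod_fun (Mm q x w) = q x (aprod C x w).
Proof. by apply: le_anti; apply: q_cong; rewrite Mmap_preimK; apply: le_refl. Qed.

Lemma quot_prod_mono x (v w : MM B x) : le v w -> le (quot_prod_fun v) (quot_prod_fun w).
Proof. by move=> vw; apply: q_cong; rewrite !Mmap_preimK. Qed.

Definition quot_prod := Build_PosHom quot_prod_mono.

Lemma quot_assoc x u : quot_prod x (Mm quot_prod x u) = quot_prod x (flat T _ x u).
Proof.
have [w <-] := pres_surj (fun y => pres_surj q_surj (x := y)) u.
rewrite /= (Mmap_comp_ext (h := compH q (aprod C))); last by move=> y a; apply: quot_prod_funE.
by rewrite Mmap_comp quot_prod_funE alg_assoc -flat_nat quot_prod_funE.
Qed.

Lemma quot_unit x a : quot_prod x (sing T _ x a) = a.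
Proof. by have [c <-] := q_surj a; rewrite /= -sing_nat quot_prod_funE alg_unit. Qed.

Definition QuotAlg : Alg T := Build_Alg quot_assoc quot_unit.

Definition quot_hom : Hom C QuotAlg :=
  @Build_Hom _ _ C QuotAlg q (fun x u => esym (quot_prod_funE u)).

End Quotient.

Lemma syn_alg_exists (S : Alphabet Xi) xi (K : Language T S xi) :
  HasSynAlg K -> exists B : Alg T, IsSyn K B /\ SortFinite B.
Proof.
move=> [B [q [q_surj [q_le [B_fin q_cong]]]]].
have q_cong' x (s t : MM (MS T S) x) :
    le (Mm q x s) (Mm q x t) -> le (q x (aprod (MS T S) x s)) (q x (aprod (MS T S) x t)).
  by move=> st; apply/q_le; apply: q_cong.
exists (@QuotAlg (MS T S) B q q_surj q_cong'); split => //.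
by exists (@quot_hom (MS T S) B q q_surj q_cong').
Qed.

(** * Factorisation through surjective morphisms *)

Section Factor.
Variables (C A B : Alg T) (f : Hom C A) (g : PosHom C B) (f_surj : Surj f).

Definition kernel_le x := forall s t : C x, le (f x s) (f x t) -> le (g x s) (g x t).

Definition factor x (a : A x) : B x :=
  g x (proj1_sig (constructive_indefinite_description _ (f_surj a))).

Lemma factorE x c : kernel_le x -> factor (f x c) = g x c.
Proof.
rewrite /factor => fg; case: constructive_indefinite_description => c' fc'.
by apply: le_anti; apply: fg; rewrite fc'; apply: le_refl.
Qed.

Lemma factor_le x (a b : A x) : kernel_le x -> le a b -> le (factor a) (factor b).
Proof.
have [c <-] := f_surj a; have [d <-] := f_surj b.
by move=> fg cd; rewrite !factorE //; apply: fg.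
Qed.

End Factor.

Lemma quotient_of_kernel_le (C A B : Alg T) (f : Hom C A) (g : Hom C B) :
  Surj f -> Surj g -> (forall x, kernel_le f g x) -> QuotientOf A B.
Proof.
move=> f_surj g_surj fg.
pose h := Build_PosHom (fun x a b => @factor_le _ _ _ f g f_surj x a b (fg x)).
have h_comm x u : h x (aprod A x u) = aprod B x (Mm h x u).
  have [w <-] := pres_surj f_surj u.
  rewrite -hcomm /= factorE // hcomm; congr (aprod B x _).
  by symmetry; apply: Mmap_comp_ext => y c; apply: factorE.
exists (Build_Hom h_comm) => x b; have [c <-] := g_surj x b.
by exists (f x c); apply: factorE.
Qed.

Lemma restr_quotient_of_kernel_le (D : list Xi) (C A B : Alg T) (f : Hom C A) (g : Hom C B) :
  Surj f -> Surj g -> (forall x, List.In x D -> kernel_le f g x) -> RestrQuotientOf D A B.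
Proof.
move=> f_surj g_surj fg.
pose hf x (a : Restr A D x) : Restr B D x :=
  exist _ (factor g f_surj (proj1_sig a)) (proj2_sig a).
have h_mono x (a b : Restr A D x) : le a b -> le (hf x a) (hf x b).
  exact: (factor_le f_surj (fg x (proj2_sig a))).
pose h := Build_PosHom h_mono.
pose rf x (c : Restr C D x) : Restr A D x := exist _ (f x (proj1_sig c)) (proj2_sig c).
have rho_mono x (c d : Restr C D x) : le c d -> le (rf x c) (rf x d).
  exact: (@hmono _ _ _ f x (proj1_sig c) (proj1_sig d)).
pose rho := Build_PosHom rho_mono.
have rho_surj : Surj rho.
  by move=> y [a Da]; have [c <-] := f_surj y a; exists (exist _ c Da); apply: Sub_val_inj.
exists h; split.
  move=> x [b Db]; have [c <-] := g_surj x b.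
  by exists (exist _ (f x c) Db); apply: Sub_val_inj; rewrite /= factorE //; apply: fg.
move=> x Dx u; have [w <-] := pres_surj rho_surj u.
have -> : Mm (incl _) x (Mm rho x w) = Mm f x (Mm (incl _) x w).
  by rewrite !(Mmap_comp_ext (h := compH f (incl _))).
have -> : Mm (incl _) x (Mm h x (Mm rho x w)) = Mm g x (Mm (incl _) x w).
  rewrite -!Mmap_comp; apply: Mmap_ext => y [c Dy].
  by rewrite /= factorE //; apply: fg.
by rewrite -!hcomm /= factorE //; apply: fg.
Qed.

(** * Finitary algebras *)

Lemma In_enum (I : finType) (i : I) : List.In i (enum I).
Proof.
have : i \in enum I by rewrite mem_enum.
by elim: (enum I) => //= j s IH; rewrite in_cons => /orP [/eqP ->|/IH]; auto.
Qed.

Lemma In_tnth (U : Type) (l : list U) (t : U) :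
  List.In t l -> exists i, tnth (in_tuple l) i = t.
Proof.
elim: l => //= a l IH [<-|/IH [i <-]]; first by exists ord0; rewrite (tnth_nth a).
by exists (lift ord0 i); rewrite !(tnth_nth a).
Qed.

Lemma sort_finite_surj (A B : SPos Xi) (f : forall x, A x -> B x) :
  SortFinite A -> (forall x b, exists a, f x a = b) -> SortFinite B.
Proof.
move=> A_fin f_surj x; have [l Al] := A_fin x.
by exists (List.map (f x) l) => b; have [a <-] := f_surj x b; apply: List.in_map.
Qed.

Lemma sort_finite_sub (A : SPos Xi) (P : forall x, A x -> Prop) :
  SortFinite A -> SortFinite (Defs.Sub P).
Proof.
move=> A_fin x; have [l Al] := A_fin x.
pose in_P a := if excluded_middle_informative (P x a) is left Pa
               then (exist _ a Pa :: nil)%list else nil.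
exists (List.flat_map in_P l) => -[a Pa]; apply/List.in_flat_map; exists a.
split=> //; rewrite /in_P; case: excluded_middle_informative => // Pa'.
by left; apply: Sub_val_inj.
Qed.

Lemma sort_finite_prod (I : finType) (F : I -> Alg T) :
  (forall i, SortFinite (F i)) -> SortFinite (ProdPos F).
Proof.
move=> F_fin x.
have [L FL] : exists L : forall i, list (F i x), forall i a, List.In a (L i).
  by exists (fun i => proj1_sig (constructive_indefinite_description _ (F_fin i x))) => i;
     case: constructive_indefinite_description.
suff [Fs Fs_cover] : exists Fs : list (ProdPos F x), forall f : ProdPos F x,
    exists2 g, List.In g Fs & forall j, List.In j (enum I) -> g j = f j.
  exists Fs => f; have [g Fs_g gf] := Fs_cover f.
  suff <- : g = f by [].
  by apply: functional_extensionality_dep => j; apply: gf; apply: In_enum.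
elim: (enum I) => [|j js [Fs IH]].
  have [[f0 _]|no_f] := classic (exists f0 : ProdPos F x, True).
    by exists (f0 :: nil)%list => f; exists f0 => //; left.
  by exists nil => f; case: no_f; exists f.
exists (List.flat_map (fun g => List.map (fun a => dfwith g a) (L j)) Fs) => f.
have [g Fs_g gf] := IH f; exists (dfwith g (f j)).
  by apply/List.in_flat_map; exists g; split => //; apply: List.in_map.
move=> k /= jk_js; case: dfwithP jk_js => // k' /eqP jk' [//|]; exact: gf.
Qed.

Lemma sort_finite_elements (A : SPos Xi) (D : list Xi) : SortFinite A ->
  exists G : list {x : Xi & A x}, forall x, List.In x D -> forall a, List.In (existT _ x a) G.
Proof.
move=> A_fin; elim: D => [|x D [G IH]]; first by exists nil.
have [l l_cover] := A_fin x.
exists (List.map (fun a => existT _ x a) l ++ G)%list => y [<-|D_y] a; apply: List.in_or_app.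
  by left; apply: List.in_map.
by right; apply: IH.
Qed.

Lemma fin_gen_of_free_surj (S : Alphabet Xi) (A : Alg T) (h : Hom (MS T S) A) :
  Surj h -> FinGen A.
Proof.
move=> h_surj.
pose gen (a : asym S) : {x : Xi & A x} :=
  existT _ (asort a) (h _ (sing T (APos S) (asort a) (exist _ a erefl))).
exists (List.map gen (enum (asym S))) => C C_closed C_gen.
have C_sing y (o : APos S y) : C y (h y (sing T _ y o)).
  by case: o => a ay; subst y; apply: (C_gen (gen a)); apply: List.in_map; apply: In_enum.
pose g := APos_hom (fun y o => exist _ _ (C_sing y o) : Defs.Sub C y).
move=> x a; have [s <-] := h_surj x a.
have := C_closed x (Mm g x s).
rewrite (Mmap_comp_ext (h := compH h (sing T _))) // Mmap_comp -hcomm /=.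
by rewrite flat_Msing.
Qed.

Definition gen_alphabet (A : SPos Xi) (G : list {x : Xi & A x}) : Alphabet Xi :=
  {| asym := 'I_(size G); asort := fun i => projT1 (tnth (in_tuple G) i) |}.

Definition gen_val (A : SPos Xi) (G : list {x : Xi & A x}) y (o : APos (gen_alphabet G) y) : A y :=
  let: exist i e := o in eq_rect _ A (projT2 (tnth (in_tuple G) i)) y e.

Lemma free_surj_of_fin_gen (A : Alg T) :
  FinGen A -> exists (S : Alphabet Xi) (phi : Hom (MS T S) A), Surj phi.
Proof.
move=> [G G_gen]; pose phi := free_ext (APos_hom (@gen_val A G)).
exists (gen_alphabet G), phi => x a.
apply: (G_gen (im_pred phi)); first exact: im_closed.
move=> t t_G; have [i <-] := In_tnth t_G.
exists (sing T (APos (gen_alphabet G)) _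
  (exist (fun j : asym (gen_alphabet G) => asort j = _) i erefl)).
by rewrite free_ext_sing.
Qed.

Lemma free_hom_lift (S : Alphabet Xi) (A B : Alg T) (h : Hom A B) (chi : Hom (MS T S) B) :
  Surj h -> exists psi : Hom (MS T S) A, forall x t, h x (psi x t) = chi x t.
Proof.
move=> h_surj.
pose g y (o : APos S y) : A y :=
  proj1_sig (constructive_indefinite_description _ (h_surj y (chi y (sing T _ y o)))).
exists (free_ext (APos_hom g)); apply: (eq_free_hom (h1 := comp_hom h _)) => y o.
by rewrite /= sing_nat alg_unit /g /=; case: constructive_indefinite_description.
Qed.

(** * Recognition and syntactic algebras *)

Lemma upset_recognised (S : Alphabet Xi) (A : Alg T) (phi : Hom (MS T S) A) xi (a : A xi) :
  Recognises A (fun s => le a (phi xi s)).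
Proof. by exists phi, (le a); split=> // b c ab bc; apply: le_trans ab bc. Qed.

Definition hole (S : Alphabet Xi) xi : MM (APos (AddHole S xi)) xi :=
  sing T (APos (AddHole S xi)) xi (exist (fun a : asym (AddHole S xi) => asort a = xi) None erefl).

Lemma plug_hole (S : Alphabet Xi) xi (s : MM (APos S) xi) : plug s (hole S xi) = s.
Proof. by rewrite /plug /hole sing_nat flat_sing. Qed.

Lemma syn_recognises (S : Alphabet Xi) xi (K : Language T S xi) (B : Alg T) :
  IsSyn K B -> Recognises B K.
Proof.
move=> [q [q_surj q_le]].
exists q, (fun b => exists2 s, K s & le (q xi s) b); split.
  by move=> a b [s Ks sa] ab; exists s => //; apply: le_trans sa ab.
move=> s; split=> [Ks|[s' Ks' s's]]; first by exists s => //; apply: le_refl.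
by have := proj1 (q_le _ _ _) s's (hole S xi); rewrite !plug_hole; apply.
Qed.

Lemma hom_plug_le (S : Alphabet Xi) (A : Alg T) (phi : Hom (MS T S) A) zeta
    (s t : MM (APos S) zeta) xi (p : MM (APos (AddHole S zeta)) xi) :
  le (phi zeta s) (phi zeta t) -> le (phi xi (plug s p)) (phi xi (plug t p)).
Proof.
move=> st; rewrite /plug !(hcomm phi) /=; apply: hmono.
rewrite (Mmap_comp_ext (h := compH phi (plug_hom s))) //.
rewrite (Mmap_comp_ext (h := compH phi (plug_hom t))) //.
apply: Mmap_le => y [[a|] e] /=; first exact: le_refl.
by case: y / e.
Qed.

Lemma recognising_hom_syn_le (S : Alphabet Xi) xi (K : Language T S xi) (A : Alg T)
    (phi : Hom (MS T S) A) (P : A xi -> Prop) :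
  (forall a b, P a -> le a b -> P b) -> (forall s, K s <-> P (phi xi s)) ->
  forall zeta (s t : MM (APos S) zeta), le (phi zeta s) (phi zeta t) -> SynLe K s t.
Proof. by move=> P_up K_P zeta s t st p; rewrite !K_P => Ps; apply: P_up Ps (hom_plug_le p st). Qed.

Lemma syn_sort_finite (S : Alphabet Xi) xi (K : Language T S xi) (B : Alg T) :
  HasSynAlg K -> IsSyn K B -> SortFinite B.
Proof.
move=> /syn_alg_exists [B0 [[q0 [q0_surj q0_le]] B0_fin]] [q [q_surj q_le]].
have [h h_surj] : QuotientOf B0 B.
  apply: (quotient_of_kernel_le q0_surj q_surj) => x s t st.
  exact/q_le/q0_le.
exact: sort_finite_surj B0_fin h_surj.
Qed.

Lemma recognises_of_quotient (A B : Alg T) (G : Alphabet Xi) xi (L : Language T G xi) :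
  QuotientOf A B -> Recognises B L -> Recognises A L.
Proof.
move=> [h h_surj] [chi [P [P_up L_P]]]; have [psi psiE] := free_hom_lift chi h_surj.
exists psi, (fun a => P (h xi a)); split=> [a b Pa ab|t]; first exact: P_up Pa (hmono h ab).
by rewrite L_P psiE.
Qed.

Lemma fin_gen_quotient (A B : Alg T) : FinGen A -> QuotientOf A B -> FinGen B.
Proof.
move=> /free_surj_of_fin_gen [S [phi phi_surj]] [h h_surj].
apply: (fin_gen_of_free_surj (h := comp_hom h phi)) => x b.
by have [a <-] := h_surj x b; have [s <-] := phi_surj x a; exists s.
Qed.

Lemma recognises_of_restr_quotient (D : list Xi) (A B : Alg T) (G : Alphabet Xi) xi
    (L : Language T G xi) :
  List.In xi D -> (forall a : asym G, List.In (asort a) D) ->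
  RestrQuotientOf D A B -> Recognises B L -> Recognises A L.
Proof.
move=> D_xi D_G [h [h_surj h_comm]] [chi [P [P_up L_P]]].
have D_o y (o : APos G y) : List.In y D by case: o => a ay; subst y.
pose g y (o : APos G y) : Restr A D y := proj1_sig (constructive_indefinite_description _
  (h_surj y (exist _ (chi y (sing T _ y o)) (D_o y o)))).
have gE y o : proj1_sig (h y (g y o)) = chi y (sing T _ y o).
  by rewrite /g; case: constructive_indefinite_description => a /= ->.
pose psi := free_ext (APos_hom (fun y o => proj1_sig (g y o))).
have psiE t : proj1_sig (h xi (exist _ (psi xi t) D_xi)) = chi xi t.
  have -> : psi xi t = aprod A xi (Mm (incl _) xi (Mm (APos_hom g) xi t)).
    by rewrite /=; congr (aprod A xi _); symmetry; apply: Mmap_comp_ext.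
  rewrite h_comm (Mmap_comp_ext (h := compH h (APos_hom g))) //.
  rewrite (Mmap_comp_ext (h := compH chi (sing T _))); last by move=> y o; apply: gE.
  by rewrite Mmap_comp -(hcomm chi) /= flat_Msing.
exists psi, (fun a => P (proj1_sig (h xi (exist _ a D_xi)))); split=> [a b Pa ab|t].
  exact: P_up Pa (hmono h (x := xi) (a := exist _ a D_xi) (b := exist _ b D_xi) ab).
by rewrite L_P psiE.
Qed.

(** * Pseudo-varieties *)

Definition id_hom (A : Alg T) : Hom A A :=
  @Build_Hom _ _ A A (idH A) (fun x u => esym (congr1 (aprod A x) (Mmap_id u))).

Section PseudoVariety.
Variables (W : Alg T -> Prop) (W_pv : PseudoVariety W).

Lemma SubOfFinProd_self (A : Alg T) : W A -> SubOfFinProd W A.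
Proof.
by move=> WA; exists unit, (fun _ => A), (fun _ => id_hom A); split=> // x a b; split=> [|/(_ tt)].
Qed.

Lemma SubOfFinProd_prod (I : finType) (F : I -> Alg T) :
  (forall i, W (F i)) -> SubOfFinProd W (ProdAlg F).
Proof. by move=> WF; exists I, F, (proj_hom F). Qed.

Lemma SubOfFinProd_sub (A : Alg T) (C : forall x, A x -> Prop) (C_closed : SubClosed C) :
  SubOfFinProd W A -> SubOfFinProd W (SubAlg C_closed).
Proof.
move=> [I [F [f [WF f_emb]]]].
by exists I, F, (fun i => comp_hom (f i) (incl_hom C_closed)); split=> // x a b; apply: f_emb.
Qed.

Lemma pv_image (S : Alphabet Xi) (A : Alg T) (h : Hom (MS T S) A) :
  SortFinite A -> SubOfFinProd W A -> W (ImAlg h).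
Proof.
move=> A_fin A_sub; case: W_pv => _ [_ [W_sub _]]; apply: W_sub.
  split; first exact: sort_finite_sub.
  exact: (fin_gen_of_free_surj (h := corestr_hom h) (corestr_surj h)).
exact: SubOfFinProd_sub.
Qed.

Lemma syn_in_pv (S : Alphabet Xi) xi (K : Language T S xi) (A B : Alg T) :
  W A -> Recognises A K -> IsSyn K B -> W B.
Proof.
move=> WA [phi [P [P_up K_P]]] [q [q_surj q_le]].
case: (W_pv) => W_fin [W_quot _]; apply: (W_quot (ImAlg phi)).
  by apply: pv_image; [case: (W_fin A WA) | apply: SubOfFinProd_self].
apply: (quotient_of_kernel_le (f := corestr_hom phi) (corestr_surj phi) q_surj) => x s t st.
exact/q_le/(recognising_hom_syn_le P_up K_P).
Qed.

Lemma separating_family (S : Alphabet Xi) (A : Alg T) (phi : Hom (MS T S) A)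
    (G : list {x : Xi & A x}) :
  (forall xi (K : Language T S xi), Recognises A K -> exists B, W B /\ Recognises B K) ->
  exists (I : finType) (F : I -> Alg T) (Psi : Hom (MS T S) (ProdAlg F)),
    (forall i, W (F i)) /\
    forall t, List.In t G -> forall s u : MM (APos S) (projT1 t),
      le (Psi _ s) (Psi _ u) -> le (projT2 t) (phi _ s) -> le (projT2 t) (phi _ u).
Proof.
move=> A_rec; pose t_ (i : 'I_(size G)) := tnth (in_tuple G) i.
have sep i : exists BP : {B : Alg T & Hom (MS T S) B}, W (projT1 BP) /\
    forall s u, le (projT2 BP _ s) (projT2 BP _ u) ->
      le (projT2 (t_ i)) (phi _ s) -> le (projT2 (t_ i)) (phi _ u).
  have [B [WB [psi [P [P_up K_P]]]]] := A_rec _ _ (upset_recognised phi (projT2 (t_ i))).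
  exists (existT _ B psi); split=> // s u su; rewrite !K_P => Ps.
  exact: P_up Ps su.
pose BP i := proj1_sig (constructive_indefinite_description _ (sep i)).
have BP_sep i := proj2_sig (constructive_indefinite_description _ (sep i)).
exists 'I_(size G), (fun i => projT1 (BP i)), (tuple_hom (fun i => projT2 (BP i))).
split=> [i|t t_G]; first exact: (proj1 (BP_sep i)).
have [i <-] := In_tnth t_G; move=> s u su.
exact: (proj2 (BP_sep i) s u (su i)).
Qed.

Lemma pv_mem_of_recognised (A : Alg T) :
  Finitary A ->
  (forall S xi (K : Language T S xi), Recognises A K -> exists B, W B /\ Recognises B K) ->
  W A.
Proof.
move=> [A_fin A_gen] A_rec; case: (W_pv) => W_fin [_ [_ W_acc]]; apply: W_acc => // D.
have [S [phi phi_surj]] := free_surj_of_fin_gen A_gen.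
have [G G_cover] := sort_finite_elements D A_fin.
have [I [F [Psi [WF Psi_sep]]]] := separating_family phi G (A_rec S).
exists (ImAlg Psi); split.
  apply: pv_image; last exact: SubOfFinProd_prod.
  by apply: sort_finite_prod => i; case: (W_fin _ (WF i)).
apply: (restr_quotient_of_kernel_le (f := corestr_hom Psi) (corestr_surj Psi) phi_surj).
move=> x D_x s u su.
exact: (Psi_sep (existT _ x (phi x s)) (G_cover x D_x _) s u su (le_refl _)).
Qed.

End PseudoVariety.

(** * Varieties of languages *)

Lemma lang_eqv (KK : LangClass T) (S : Alphabet Xi) xi (K L : Language T S xi) :
  KK S xi K -> (forall s, K s <-> L s) -> KK S xi L.
Proof.
move=> KK_K KL; suff -> : L = K by [].
by apply: functional_extensionality => s; apply: propositional_extensionality; split=> /KL.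
Qed.

Section LanguageVariety.
Variable KK : LangClass T.
Arguments KK : clear implicits.
Hypothesis KK_var : LangVariety KK.

Lemma lang_bigcap (S : Alphabet Xi) xi (X : Type) (l : list X) (L : X -> Language T S xi) :
  (forall x, List.In x l -> KK S xi (L x)) ->
  KK S xi (fun s => forall x, List.In x l -> L x s).
Proof.
case: KK_var => _ [KK_full [_ [KK_and _]]].
elim: l => [|y l IH] KK_L.
  by apply: lang_eqv (KK_full S xi) _ => s; split.
have KK_l := IH (fun x l_x => KK_L x (or_intror l_x)).
apply: lang_eqv (KK_and _ _ _ _ (KK_L y (or_introl erefl)) KK_l) _.
by move=> s; split=> [[Ly Ll] x [<-|/Ll]|Ll] //; split=> [|x l_x]; apply: Ll; [left|right].
Qed.

Lemma lang_bigcup (S : Alphabet Xi) xi (X : Type) (l : list X) (L : X -> Language T S xi) :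
  (forall x, List.In x l -> KK S xi (L x)) ->
  KK S xi (fun s => exists2 x, List.In x l & L x s).
Proof.
case: KK_var => KK_empty [_ [KK_or _]].
elim: l => [|y l IH] KK_L.
  by apply: lang_eqv (KK_empty S xi) _ => s; split=> // [[]].
have KK_l := IH (fun x l_x => KK_L x (or_intror l_x)).
apply: lang_eqv (KK_or _ _ _ _ (KK_L y (or_introl erefl)) KK_l) _.
move=> s; split=> [[Ly|[x l_x Lx]]|[x [<-|l_x] Lx]].
- by exists y => //; left.
- by exists x => //; right.
- by left.
- by right; exists x.
Qed.

(* An upset of a sort-wise finite poset is the finite union of the principal upsets of its
   elements. *)
Lemma lang_upset (B : SPos Xi) (S : Alphabet Xi) xi (chi : MM (APos S) xi -> B xi)
    (P : B xi -> Prop) :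
  SortFinite B -> (forall a b, P a -> le a b -> P b) ->
  (forall b, P b -> KK S xi (fun s => le b (chi s))) -> KK S xi (fun s => P (chi s)).
Proof.
move=> B_fin P_up KK_up; have [l l_cover] := B_fin xi.
case: KK_var => KK_empty _.
have KK_in_P b : KK S xi (fun s => P b /\ le b (chi s)).
  have [Pb|nPb] := classic (P b).
    by apply: lang_eqv (KK_up b Pb) _ => s; split=> [|[]].
  by apply: lang_eqv (KK_empty S xi) _ => s; split=> [|[]].
apply: lang_eqv (lang_bigcup (fun b _ => KK_in_P b)) _ => s.
split=> [[b _ [Pb bs]]|Ps]; first exact: P_up Pb bs.
by exists (chi s) => //; split=> //; apply: le_refl.
Qed.

(* The principal upset of [b] is cut out by finitely many derivatives of [K]: for each element
   [c] outside it, one context accepting a preimage of [b] but no preimage of [c]. *)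
Lemma syn_upset_lang (S : Alphabet Xi) xi (K : Language T S xi) (B : Alg T)
    (q : Hom (MS T S) B) :
  KK S xi K -> Surj q -> (forall x s t, le (q x s) (q x t) <-> SynLe K s t) -> SortFinite B ->
  forall zeta (b : B zeta), KK S zeta (fun s => le b (q zeta s)).
Proof.
move=> KK_K q_surj q_le B_fin zeta b; have [s0 <-] := q_surj zeta b.
have [l l_cover] := B_fin zeta.
case: KK_var => _ [KK_full [_ [_ [_ KK_der]]]].
have cut c : exists L : Language T S zeta, [/\ KK S zeta L,
    forall s, le (q zeta s0) (q zeta s) -> L s &
    forall s, q zeta s = c -> L s -> le (q zeta s0) c].
  have [s0c|ns0c] := classic (le (q zeta s0) c).
    by exists (fun _ => True); split=> //; apply: KK_full.
  have [t tc] := q_surj zeta c; subst c.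
  have nsyn : ~ SynLe K s0 t by move=> /q_le.
  have [p np] := not_all_ex_not _ _ nsyn; have [Kp nKp] := imply_to_and _ _ np.
  exists (fun s => K (plug s p)); split; first exact: KK_der.
    by move=> s /q_le; apply.
  by move=> s qst Ks; case: nKp; apply: (proj1 (q_le _ _ _) _ p Ks); rewrite qst; apply: le_refl.
pose L c := proj1_sig (constructive_indefinite_description _ (cut c)).
have L_spec c : [/\ KK S zeta (L c), forall s, le (q zeta s0) (q zeta s) -> L c s &
    forall s, q zeta s = c -> L c s -> le (q zeta s0) c].
  exact: proj2_sig (constructive_indefinite_description _ (cut c)).
have KK_L c : KK S zeta (L c) by case: (L_spec c).
apply: lang_eqv (lang_bigcap (l := l) (fun c _ => KK_L c)) _ => s.
split=> [Ls|s0s c _]; last by case: (L_spec c) => _ /(_ s s0s).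
by case: (L_spec (q zeta s)) => _ _ /(_ s erefl); apply; apply: Ls.
Qed.

Lemma syn_recognised_lang (S : Alphabet Xi) xi (K : Language T S xi) (B : Alg T) :
  KK S xi K -> IsSyn K B -> SortFinite B ->
  forall G xi' (L : Language T G xi'), Recognises B L -> KK G xi' L.
Proof.
move=> KK_K [q [q_surj q_le]] B_fin G xi' L [chi [P [P_up L_P]]].
have [psi psiE] := free_hom_lift chi q_surj.
have KK_P : KK S xi' (fun s => P (q xi' s)).
  apply: (lang_upset B_fin P_up) => b _.
  exact: (syn_upset_lang KK_K q_surj q_le B_fin).
case: KK_var => _ [_ [_ [_ [KK_inv _]]]].
by apply: lang_eqv (KK_inv _ _ psi _ _ KK_P) _ => t; rewrite L_P psiE.
Qed.

Definition OnlyRecognises (A : Alg T) :=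
  Finitary A /\ forall S xi (K : Language T S xi), Recognises A K -> KK S xi K.

Lemma OnlyRecognises_quotient (A B : Alg T) :
  OnlyRecognises A -> QuotientOf A B -> OnlyRecognises B.
Proof.
move=> [[A_fin A_gen] A_rec] AB; have [h h_surj] := AB.
split; first split.
- exact: sort_finite_surj A_fin h_surj.
- exact: fin_gen_quotient A_gen AB.
- by move=> S xi K /(recognises_of_quotient AB); apply: A_rec.
Qed.

Lemma OnlyRecognises_subprod (B : Alg T) :
  Finitary B -> SubOfFinProd OnlyRecognises B -> OnlyRecognises B.
Proof.
move=> B_finitary [I [F [f [F_only f_emb]]]]; split=> // G xi L [chi [P [P_up L_P]]].
apply: lang_eqv (lang_upset (proj1 B_finitary) P_up _) _ => [b _|s]; last exact: iff_sym (L_P s).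
pose Lf i s := le (f i xi b) (f i xi (chi xi s)).
have KK_Lf i : KK G xi (Lf i).
  by apply: (proj2 (F_only i)); apply: (upset_recognised (comp_hom (f i) chi)).
apply: lang_eqv (lang_bigcap (l := enum I) (fun i _ => KK_Lf i)) _ => s.
by split=> [bs|/f_emb bs i _]; [apply/f_emb => i; apply: bs; apply: In_enum | apply: bs].
Qed.

Lemma OnlyRecognises_acc (B : Alg T) :
  Finitary B -> SortAccPoint OnlyRecognises B -> OnlyRecognises B.
Proof.
move=> B_finitary B_acc; split=> // G xi L L_B.
(* The sort of [L] and those of the letters of [G] suffice to lift a recognising morphism
   from [B] to [A]. *)
have [A [[_ A_rec] AB]] := B_acc (xi :: List.map (@asort _ G) (enum (asym G)))%list.
apply: A_rec; apply: (recognises_of_restr_quotient _ _ AB L_B); first by left.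
by move=> a; right; apply: List.in_map; apply: In_enum.
Qed.

Lemma OnlyRecognises_pv : PseudoVariety OnlyRecognises.
Proof.
split; first by move=> A [].
split; first exact: OnlyRecognises_quotient.
by split; [apply: OnlyRecognises_subprod | apply: OnlyRecognises_acc].
Qed.

Hypothesis KK_syn : forall S xi (K : Language T S xi), KK S xi K -> HasSynAlg K.

Lemma syn_OnlyRecognises (S : Alphabet Xi) xi (K : Language T S xi) (B : Alg T) :
  KK S xi K -> IsSyn K B -> OnlyRecognises B.
Proof.
move=> KK_K B_syn; have B_fin := syn_sort_finite (KK_syn KK_K) B_syn.
split; last exact: syn_recognised_lang KK_K B_syn B_fin.
by split=> //; case: B_syn => q [q_surj _]; apply: fin_gen_of_free_surj q_surj.
Qed.

Definition IsSynIn (B : Alg T) :=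
  exists S xi (K : Language T S xi), KK S xi K /\ IsSyn K B.

Lemma OnlyRecognises_le_pv (W : Alg T -> Prop) : PseudoVariety W ->
  (forall B, IsSynIn B -> W B) -> forall A, OnlyRecognises A -> W A.
Proof.
move=> W_pv W_syn A [A_finitary A_rec].
apply: (pv_mem_of_recognised W_pv A_finitary) => S xi K /A_rec KK_K.
have [B [B_syn _]] := syn_alg_exists (KK_syn KK_K).
exists B; split; last exact: syn_recognises.
by apply: W_syn; exists S, xi, K.
Qed.

Lemma OnlyRecognises_generated (A : Alg T) : OnlyRecognises A <-> GeneratedPV IsSynIn A.
Proof.
split=> [A_only W W_pv W_syn|]; first exact: OnlyRecognises_le_pv.
apply; first exact: OnlyRecognises_pv.
by move=> B [S [xi [K [KK_K B_syn]]]]; apply: syn_OnlyRecognises B_syn.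
Qed.

End LanguageVariety.

Lemma recognisable_iff_syn (V : Alg T -> Prop) : PseudoVariety V ->
  (forall A S xi (K : Language T S xi), V A -> Recognises A K -> HasSynAlg K) ->
  forall S xi (K : Language T S xi),
    (exists A, V A /\ Recognises A K) <-> (exists B, IsSyn K B /\ V B).
Proof.
move=> V_pv V_syn S xi K.
split=> [[A [VA A_K]]|[B [B_syn VB]]]; last by exists B; split=> //; apply: syn_recognises.
have [B [B_syn _]] := syn_alg_exists (V_syn _ _ _ _ VA A_K).
by exists B; split=> //; apply: (syn_in_pv V_pv VA A_K B_syn).
Qed.

Lemma recognised_iff_OnlyRecognises (V : Alg T -> Prop) (KK : LangClass T) :
  PseudoVariety V -> LangVariety KK ->
  (forall S xi (K : Language T S xi), KK S xi K -> HasSynAlg K) ->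
  (forall S xi (K : Language T S xi), KK S xi K <-> exists A, V A /\ Recognises A K) <->
  (forall A, V A <-> OnlyRecognises KK A).
Proof.
move=> V_pv KK_var KK_syn; split=> [KK_V A|V_KK S xi K].
  split=> [VA|A_only].
    split; first by case: V_pv => /(_ A VA).
    by move=> S xi K A_K; apply/KK_V; exists A.
  apply: (OnlyRecognises_le_pv KK_syn V_pv _ A_only) => B [S [xi [K [KK_K B_syn]]]].
  have [C [VC C_K]] := proj1 (KK_V _ _ _) KK_K.
  exact: (syn_in_pv V_pv VC C_K B_syn).
split=> [KK_K|[A [/V_KK [_ A_rec] /A_rec //]]].
have [B [B_syn _]] := syn_alg_exists (KK_syn _ _ _ KK_K).
exists B; split; last exact: syn_recognises.
exact/V_KK/(syn_OnlyRecognises KK_var KK_syn KK_K B_syn).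
Qed.

End Eilenberg.

Theorem theorem5p11 (Xi : Type) (T : Monad Xi)
  (V : Alg T -> Prop) (KK : LangClass T)
  (hV : PseudoVariety V)
  (hVsyn : forall (A : Alg T) (S : Alphabet Xi) (xi : Xi) (K : Language T S xi),
      V A -> Recognises A K -> HasSynAlg K)
  (hKK : LangVariety KK)
  (hKKsyn : forall (S : Alphabet Xi) (xi : Xi) (K : Language T S xi),
      KK S xi K -> HasSynAlg K) :
  let st1 := forall (S : Alphabet Xi) (xi : Xi) (K : Language T S xi),
      KK S xi K <-> exists A : Alg T, V A /\ Recognises A K in
  let st2 := forall (S : Alphabet Xi) (xi : Xi) (K : Language T S xi),
      KK S xi K <-> exists B : Alg T, IsSyn K B /\ V B in
  let st3 := forall A : Alg T,
      V A <-> (Finitary A /\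
               forall (S : Alphabet Xi) (xi : Xi) (K : Language T S xi),
                 Recognises A K -> KK S xi K) in
  let st4 := forall A : Alg T,
      V A <-> GeneratedPV
                (fun B : Alg T => exists (S : Alphabet Xi) (xi : Xi) (K : Language T S xi),
                    KK S xi K /\ IsSyn K B) A in
  (st1 <-> st2) /\ (st2 <-> st3) /\ (st3 <-> st4).
Proof.
move=> st1 st2 st3 st4.
have syn_iff := recognisable_iff_syn hV hVsyn.
have gen_iff := OnlyRecognises_generated hKK hKKsyn.
have e12 : st1 <-> st2.
  by split=> H S xi K; rewrite H; [apply: syn_iff | apply: iff_sym; apply: syn_iff].
have e13 : st1 <-> st3 := recognised_iff_OnlyRecognises hV hKK hKKsyn.
have e34 : st3 <-> st4.
  by split=> H A; rewrite H; [apply: gen_iff | apply: iff_sym; apply: gen_iff].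
by split=> //; split=> //; apply: iff_trans (iff_sym e12) e13.
Qed.
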